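(* Let $0\to U\to M\to N\to 0$ be an exact sequence of graded $R$-modules (graded either in the multigraded or in the standard graded sense). If $U$ and $N$ have Stanley decompositions, then so does $M$, and $$\operatorname{Stdepth} M\ge \min(\operatorname{Stdepth} U,\operatorname{Stdepth} N).$$ Likewise, if $U$ and $N$ have Hilbert decompositions, then so does $M$, and $\operatorname{Hdepth} M\ge \min(\operatorname{Hdepth} U,\operatorname{Hdepth} N)$.
   Context: Let $K$ be a field and $R=K[X_1,\dots,X_n]$, considered either with the multigrading ($\mathbb{Z}^n$-grading with $\deg X_i=e_i$, the $i$-th unit vector) or with the standard grading ($\mathbb{Z}$-grading with $\deg X_i=1$). All modules are finitely generated graded $R$-modules. A graded retract of $R$ is a graded $K$-subalgebra $S\subseteq R$ for which there is a graded $K$-algebra epimorphism $\pi:R\to S$ with $\pi|_S=\mathrm{id}_S$ (in the multigraded case: subalgebras generated by a subset of the indeterminates; in the standard graded case: subalgebras generated by a set of linear forms). A Stanley decomposition of $M$ is a finite family $(S_i,x_i)_{i\in I}$ with $x_i\in M$ homogeneous, $S_i$ a graded retract of $R$, $S_i\cap\operatorname{Ann}(x_i)=0$, and $M=\bigoplus_{i\in I}S_ix_i$ as graded $K$-vector spaces. A Hilbert decomposition of $M$ is a finite family $(S_i,s_i)_{i\in I}$ with $s_i$ a degree ($s_i\in\mathbb{Z}^n$, resp. $\mathbb{Z}$), $S_i$ a graded retract of $R$, and $M\cong\bigoplus_{i\in I}S_i(-s_i)$ as graded $K$-vector spaces. The depth of such a decomposition is $\min_{i\in I}\dim S_i$ (the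 depth of the $R$-module $\bigoplus_i S_i$). $\operatorname{Stdepth}M$ (resp. $\operatorname{Hdepth}M$) is the maximal depth of a Stanley (resp. Hilbert) decomposition of $M$; by convention $\operatorname{Stdepth}0=\infty$ (and likewise for Hdepth). *)

From mathcomp Require Import all_boot all_algebra.
From mathcomp Require Import mpoly.
From Stdlib Require Import ClassicalEpsilon.

Set Implicit Arguments.
Unset Strict Implicit.
Unset Printing Implicit Defensive.

Import GRing.Theory.
Local Open Scope ring_scope.

(*  Multi : Z^n-grading, deg X_i = e_i (degrees are 'rV[int]_n)        *)
(*  Std   : Z-grading,   deg X_i = 1   (degrees are int)               *)
Inductive gkind := Multi | Std.

Definition degT (n : nat) (k : gkind) : zmodType :=
  match k with
  | Multi => ('rV[int]_n : zmodType)
  | Std => (int : zmodType)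
  end.

Definition mdegk (n : nat) (k : gkind) : 'X_{1..n} -> degT n k :=
  match k return 'X_{1..n} -> degT n k with
  | Multi => fun m => \row_j ((m j)%:Z)
  | Std => fun m => ((mdeg m)%:Z)
  end.

Section Graded.
Variables (K : fieldType) (n : nat) (k : gkind).
Local Notation R := {mpoly K[n]}.
Local Notation D := (degT n k).

(* p is a homogeneous element of R of degree e (0 is homogeneous of every degree) *)
Definition homR (e : D) (p : R) : Prop :=
  forall m, m \in msupp p -> mdegk k m = e.

(* A grading of the R-module M: hom d is the set of homogeneous elements   *)
(* of degree d, i.e. the graded piece M_d.  M = (+)_d M_d as K-spaces and  *)
(* X_i M_d \subseteq M_{d + deg X_i}.                                     *)
Record grading (M : lmodType R) := Grading {
  hom : D -> M -> Prop;
  hom0 : forall d, hom d 0;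
  homD : forall d x y, hom d x -> hom d y -> hom d (x + y);
  homZ : forall d (c : K) x, hom d x -> hom d (c%:MP *: x);
  homX : forall d (i : 'I_n) x, hom d x -> hom (d + mdegk k U_(i)) ('X_i *: x);
  hom_span : forall x : M, exists t (dg : 'I_t -> D) (y : 'I_t -> M),
      (forall j, hom (dg j) (y j)) /\ x = \sum_(j < t) y j;
  hom_direct : forall t (dg : 'I_t -> D) (y : 'I_t -> M),
      (forall a b, dg a = dg b -> a = b) ->
      (forall j, hom (dg j) (y j)) -> \sum_(j < t) y j = 0 -> forall j, y j = 0
}.

Definition fingen (M : lmodType R) : Prop :=
  exists t (gen : 'I_t -> M), forall x : M,
    exists a : 'I_t -> R, x = \sum_(j < t) a j *: gen j.

Definition graded_hom (M N : lmodType R) (GM : grading M) (GN : grading N)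
    (f : M -> N) : Prop :=
  (forall (a : R) (x y : M), f (a *: x + y) = a *: f x + f y) /\
  (forall d x, hom GM d x -> hom GN d (f x)).

(* Graded retracts of R.  A retract is described by a finite list ls   *)
(* of generators: in the multigraded case a list of indeterminates, in  *)
(* the standard graded case a list of linear forms.  The retract is the *)
(* K-subalgebra K[ls] generated by ls.                                  *)
Definition retract_gens (ls : seq R) : Prop :=
  match k with
  | Multi => forall l, l \in ls -> exists i : 'I_n, l = 'X_i
  | Std => forall l, l \in ls -> forall m, m \in msupp l -> mdeg m = 1%N
  end.

Definition inS (ls : seq R) (p : R) : Prop :=
  exists q : {mpoly K[size ls]}, p = q \mPo (in_tuple ls).

(* Krull dimension of K[ls] = dimension of the K-span of the linear forms ls *)
Definition rdim (ls : seq R) : nat :=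
  \rank (\matrix_(a < size ls, j < n) (nth 0 ls a)@_U_(j)).

End Graded.

Inductive enat := Fin of nat | Inf.

Definition ele (a b : enat) : bool :=
  match a, b with
  | _, Inf => true
  | Inf, Fin _ => false
  | Fin x, Fin y => (x <= y)%N
  end.

Definition emin (a b : enat) : enat :=
  match a, b with
  | Inf, b => b
  | a, Inf => a
  | Fin x, Fin y => Fin (minn x y)
  end.

Definition emin_fam t (v : 'I_t -> nat) : enat :=
  \big[emin/Inf]_(i < t) Fin (v i).

Definition emax_of (P : enat -> Prop) : enat :=
  epsilon (inhabits Inf) (fun v => P v /\ forall w, P w -> ele w v).

Section Decompositions.
Variables (K : fieldType) (n : nat) (k : gkind).
Local Notation R := {mpoly K[n]}.
Local Notation D := (degT n k).

Definition stanley_dec (M : lmodType R) (GM : grading k M)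
    t (L : 'I_t -> seq R) (x : 'I_t -> M) : Prop :=
  [/\ forall i, retract_gens k (L i),
      forall i, exists d, hom GM d (x i),
      forall i p, inS (L i) p -> p *: x i = 0 -> p = 0,
      forall y : M, exists p : 'I_t -> R,
        (forall i, inS (L i) (p i)) /\ y = \sum_(i < t) p i *: x i &
      forall p : 'I_t -> R, (forall i, inS (L i) (p i)) ->
        \sum_(i < t) p i *: x i = 0 -> forall i, p i *: x i = 0].

(* Hilbert decomposition (S_i, s_i)_{i < t}: a graded K-linear bijection *)
(* (+)_i S_i(-s_i) -> M, given componentwise by phi i : S_i -> M.        *)
Definition hilbert_dec (M : lmodType R) (GM : grading k M)
    t (L : 'I_t -> seq R) (s : 'I_t -> D) : Prop :=
  (forall i, retract_gens k (L i)) /\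
  exists phi : 'I_t -> R -> M,
  [/\ forall i (c : K) p q, inS (L i) p -> inS (L i) q ->
        phi i (c%:MP * p + q) = c%:MP *: phi i p + phi i q,
      forall i e p, inS (L i) p -> @homR K n k e p -> hom GM (e + s i) (phi i p),
      forall y : M, exists p : 'I_t -> R,
        (forall i, inS (L i) (p i)) /\ y = \sum_(i < t) phi i (p i) &
      forall p : 'I_t -> R, (forall i, inS (L i) (p i)) ->
        \sum_(i < t) phi i (p i) = 0 -> forall i, p i = 0].

Definition dec_depth t (L : 'I_t -> seq R) : enat :=
  emin_fam (fun i => rdim (L i)).

Definition has_stanley (M : lmodType R) (GM : grading k M) : Prop :=
  exists t L x, @stanley_dec M GM t L x.

Definition has_hilbert (M : lmodType R) (GM : grading k M) : Prop :=
  exists t L s, @hilbert_dec M GM t L s.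

Definition Stdepth (M : lmodType R) (GM : grading k M) : enat :=
  emax_of (fun v => exists t L x, @stanley_dec M GM t L x /\ dec_depth L = v).

Definition Hdepth (M : lmodType R) (GM : grading k M) : enat :=
  emax_of (fun v => exists t L s, @hilbert_dec M GM t L s /\ dec_depth L = v).

End Decompositions.

(* Concatenate a decomposition of U, pushed forward along f, with a
   decomposition of N lifted along g: exactness makes the concatenation a
   decomposition of M, and its depth is the minimum of the two depths.
   A Stanley decomposition of N lifts by choosing a homogeneous preimage in M
   of each generator.  A Hilbert decomposition of N requires lifting graded
   K-linear maps S(-s) -> N, S = K[ls], to graded K-linear maps S(-s) -> M.
   This is done one degree at a time: the graded piece S_e is finite
   dimensional, spanned by the degree-e components of the images of the
   finitely many monomials of small total degree; coordinates along this
   spanning family are chosen linearly through a pseudo-inverse, and the map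
   is lifted on the spanning vectors and extended by linearity. *)

From HB Require Import structures.
From Pilot Require Import Defs.
From mathcomp Require Import all_boot all_algebra.
From mathcomp Require Import mpoly.
From Stdlib Require Import ClassicalEpsilon.

Set Implicit Arguments.
Unset Strict Implicit.
Unset Printing Implicit Defensive.

Import GRing.Theory.
Local Open Scope ring_scope.

Definition fam_cat (T : Type) t1 t2 (F1 : 'I_t1 -> T) (F2 : 'I_t2 -> T)
    (i : 'I_(t1 + t2)) : T :=
  match split i with inl a => F1 a | inr b => F2 b end.

Lemma fam_cat_l (T : Type) t1 t2 (F1 : 'I_t1 -> T) (F2 : 'I_t2 -> T) a :
  fam_cat F1 F2 (lshift t2 a) = F1 a.
Proof. by rewrite /fam_cat (unsplitK (inl a : 'I_t1 + 'I_t2)). Qed.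

Lemma fam_cat_r (T : Type) t1 t2 (F1 : 'I_t1 -> T) (F2 : 'I_t2 -> T) b :
  fam_cat F1 F2 (rshift t1 b) = F2 b.
Proof. by rewrite /fam_cat (unsplitK (inr b : 'I_t1 + 'I_t2)). Qed.

Lemma big_uniq_supp (T : eqType) (V : nmodType) (s1 s2 : seq T) (F : T -> V) :
  uniq s1 -> uniq s2 -> (forall x, (x \in s1) != (x \in s2) -> F x = 0) ->
  \sum_(x <- s1) F x = \sum_(x <- s2) F x.
Proof.
move=> s1_uniq s2_uniq F0.
have restrict (s s' : seq T) : (forall x, x \in s -> x \notin s' -> F x = 0) ->
    \sum_(x <- s) F x = \sum_(x <- [seq x <- s | x \in s']) F x.
  move=> Fs; rewrite big_filter [RHS]big_mkcond /=; apply: eq_big_seq => x xs.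
  by case: ifP => // /negbT /(Fs _ xs).
rewrite (restrict s1 s2) => [|x xs1 xs2]; last first.
  by apply: F0; rewrite xs1 (negbTE xs2).
rewrite [RHS](restrict s2 s1) => [|x xs2 xs1]; last first.
  by apply: F0; rewrite xs2 (negbTE xs1).
apply: perm_big; apply: uniq_perm; rewrite ?filter_uniq //.
by move=> x; rewrite !mem_filter andbC.
Qed.

Lemma sum_ifeq (T : eqType) (V : nmodType) (r : seq T) (i : T) (v : V) :
  uniq r -> i \in r -> \sum_(e <- r) (if e == i then v else 0) = v.
Proof.
move=> r_uniq ir; rewrite (bigD1_seq i ir r_uniq) /= eqxx big1 ?addr0 //.
by move=> e /negPf ->.
Qed.

Lemma eminA : associative emin.
Proof. by case=> [a|] [b|] [c|] //=; rewrite minnA. Qed.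

Lemma eminC : commutative emin.
Proof. by case=> [a|] [b|] //=; rewrite minnC. Qed.

Lemma emin_Infl : left_id Inf emin.
Proof. by case. Qed.

HB.instance Definition _ := Monoid.isComLaw.Build enat Inf emin eminA eminC emin_Infl.

Lemma emin_fam_le t (v : 'I_t -> nat) b :
  (forall i, (v i <= b)%N) -> forall x, emin_fam v = Fin x -> (x <= b)%N.
Proof.
move=> vb; rewrite /emin_fam.
apply: (big_ind (fun e => forall x, e = Fin x -> (x <= b)%N)) => //.
- case=> [x|] [y|] Hx Hy z //=; last exact: Hy.
    by case=> <-; rewrite geq_min Hx.
  exact: Hx.
- by move=> i _ x [<-].
Qed.

Lemma emax_ofP (P : enat -> Prop) b : (exists v, P v) ->
  (forall x, P (Fin x) -> (x <= b)%N) ->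
  P (emax_of P) /\ forall w, P w -> ele w (emax_of P).
Proof.
move=> [v Pv] Pb.
apply: (epsilon_spec _ (fun u => P u /\ forall w, P w -> ele w u)).
have [PInf|PnInf] := excluded_middle_informative (P Inf).
  by exists Inf; split => // -[].
pose Q x := if excluded_middle_informative (P (Fin x)) then true else false.
have QP x : reflect (P (Fin x)) (Q x).
  by rewrite /Q; case: excluded_middle_informative => ?; constructor.
have exQ : exists x, Q x by case: v Pv => [x Px|//]; exists x; apply/QP.
have [x Qx Qmax] := ex_maxnP exQ (fun x Qx => Pb x (elimT (QP x) Qx)).
exists (Fin x); split; first exact/QP.
by case=> [y /QP /Qmax|].
Qed.

Section Graded.
Variables (K : fieldType) (n : nat) (k : gkind).
Local Notation R := {mpoly K[n]}.
Local Notation D := (degT n k).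

Section Pieces.
Variables (M : lmodType R) (GM : grading k M).

Lemma hom_sum d (I : Type) (r : seq I) (P : pred I) (F : I -> M) :
  (forall i, P i -> Defs.hom GM d (F i)) -> Defs.hom GM d (\sum_(i <- r | P i) F i).
Proof. by move=> H; apply: big_ind => //; [exact: hom0 | exact: homD]. Qed.

Lemma homN d x : Defs.hom GM d x -> Defs.hom GM d (- x).
Proof. by move=> /(homZ (-1)); rewrite mpolyCN mpolyC1 scaleN1r. Qed.

Lemma hom_direct_uniq (s : seq D) (F : D -> M) : uniq s ->
  (forall e, e \in s -> Defs.hom GM e (F e)) -> \sum_(e <- s) F e = 0 ->
  forall e, e \in s -> F e = 0.
Proof.
move=> s_uniq homF sumF0 e es.
pose dg (j : 'I_(size s)) := nth 0 s j.
have dg_inj a b : dg a = dg b -> a = b.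
  by move=> /eqP; rewrite /dg nth_uniq // => /eqP /val_inj.
have homj j : Defs.hom GM (dg j) (F (dg j)) by apply: homF; exact: mem_nth.
have sumj0 : \sum_(j < size s) F (dg j) = 0.
  by rewrite -[RHS]sumF0 [RHS](big_nth 0) big_mkord.
have := hom_direct dg_inj homj sumj0 (Ordinal (etrans (index_mem e s) es)).
by rewrite /dg /= nth_index.
Qed.
End Pieces.

(* [homR e p] unfolds to [homw (mdegk k) e p]. *)
Definition homw (G : zmodType) (w : 'X_{1..n} -> G) (d : G) (p : R) : Prop :=
  forall m, m \in msupp p -> w m = d.

Section Weight.
Variables (G : zmodType) (w : 'X_{1..n} -> G).

Lemma homw0 d : homw w d 0.
Proof. by move=> m; rewrite msupp0. Qed.

Lemma homwD d p q : homw w d p -> homw w d q -> homw w d (p + q).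
Proof. by move=> hp hq m /msuppD_le; rewrite mem_cat => /orP[/hp|/hq]. Qed.

Lemma homwZ d c p : homw w d p -> homw w d (c *: p).
Proof. by move=> hp m /msuppZ_le /hp. Qed.

Lemma homw_sum d (I : Type) (r : seq I) (P : pred I) (F : I -> R) :
  (forall i, P i -> homw w d (F i)) -> homw w d (\sum_(i <- r | P i) F i).
Proof. by move=> H; apply: big_ind => //; [exact: homw0 | exact: homwD]. Qed.

Hypotheses (w0 : w 0%MM = 0) (wD : forall m1 m2, w (m1 + m2)%MM = w m1 + w m2).

Lemma homw1 : homw w 0 1.
Proof. by move=> m; rewrite msupp1 inE => /eqP ->. Qed.

Lemma homwM d1 d2 p q : homw w d1 p -> homw w d2 q -> homw w (d1 + d2) (p * q).
Proof.
move=> hp hq m /msuppM_le /allpairsP [[m1 m2] [/= /hp <- /hq <- ->]].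
exact: wD.
Qed.

Lemma homwX d p j : homw w d p -> homw w (d *+ j) (p ^+ j).
Proof.
move=> hp; elim: j => [|j IH]; first by rewrite expr0 mulr0n; exact: homw1.
by rewrite exprS mulrS; apply: homwM.
Qed.

Lemma comp_mpolyX_homw m (t : m.-tuple R) (dd : 'I_m -> G) (mu : 'X_{1..m}) :
  (forall i, homw w (dd i) (tnth t i)) ->
  homw w (\sum_i dd i *+ mu i) ('X_[mu] \mPo t).
Proof.
move=> ht; rewrite comp_mpolyX.
apply: (big_rec2 (fun d p => homw w d p)); first exact: homw1.
by move=> i d p _; apply: homwM; apply: homwX.
Qed.

End Weight.

Lemma mdegk0 : mdegk k (0%MM : 'X_{1..n}) = 0.
Proof. by case: k => /=; [apply/rowP => j; rewrite !mxE mnm0E | rewrite mdeg0]. Qed.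

Lemma mdegkD (m1 m2 : 'X_{1..n}) : mdegk k (m1 + m2)%MM = mdegk k m1 + mdegk k m2.
Proof.
by case: k => /=; [apply/rowP => j; rewrite !mxE mnmDE PoszD | rewrite mdegD PoszD].
Qed.

(* [tdeg e] is the total degree of the monomials of degree [e]. *)
Definition tdeg (e : D) : nat :=
  match k as k0 return degT n k0 -> nat with
  | Multi => fun e => (\sum_(j < n) `|e ord0 j|)%N
  | Std => fun e => `|e|%N
  end e.

Lemma tdeg_mdegk m : tdeg (mdegk k m) = mdeg m.
Proof.
rewrite /tdeg /mdegk; case: k => //=.
by rewrite mdegE; apply: eq_bigr => j _; rewrite mxE.
Qed.

Definition monos_lt (m b : nat) : seq 'X_{1..m} := map val (enum {: 'X_{1..m < b}}).

Lemma monos_lt_uniq m b : uniq (monos_lt m b).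
Proof. by rewrite map_inj_uniq ?enum_uniq //; apply: val_inj. Qed.

Lemma mem_monos_lt m b mu : (mu \in monos_lt m b) = (mdeg mu < b)%N.
Proof.
apply/mapP/idP => [[x _ ->]|mu_lt]; first exact: bmdeg.
by exists (BMultinom mu_lt); rewrite ?mem_enum.
Qed.

Definition hmonos (e : D) : seq 'X_{1..n} := monos_lt n (tdeg e).+1.

Lemma mem_hmonos m : m \in hmonos (mdegk k m).
Proof. by rewrite mem_monos_lt tdeg_mdegk. Qed.

Definition hcomp (e : D) (p : R) : R :=
  \sum_(m <- hmonos e | mdegk k m == e) p@_m *: 'X_[m].

Lemma hcomp_is_linear e : linear (hcomp e).
Proof.
move=> c p q; rewrite /hcomp scaler_sumr -big_split /=; apply: eq_bigr => m _.
by rewrite mcoeffD mcoeffZ scalerDl scalerA.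
Qed.

HB.instance Definition _ (e : D) :=
  GRing.isLinear.Build K R R *:%R (hcomp e) (hcomp_is_linear e).

Lemma mcoeff_hcomp e p m : (hcomp e p)@_m = if mdegk k m == e then p@_m else 0.
Proof.
rewrite /hcomp raddf_sum /=; under eq_bigr do rewrite mcoeffZ mcoeffX.
case: eqP => [<-|me].
  rewrite -big_filter (bigD1_seq m) /=; first last.
  - by rewrite filter_uniq // monos_lt_uniq.
  - by rewrite mem_filter mem_hmonos eqxx.
  rewrite eqxx mulr1 big1 ?addr0 // => m' /negPf.
  by rewrite eq_sym => ->; rewrite mulr0.
rewrite big1 // => m' /eqP m'e; case: eqP => [m'm|]; last by rewrite mulr0.
by case: me; rewrite -m'm.
Qed.

Lemma hcomp_homw e p : homw (mdegk k) e (hcomp e p).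
Proof.
by move=> m; rewrite mcoeff_msupp mcoeff_hcomp; case: (mdegk k m =P e); rewrite ?eqxx.
Qed.

Lemma hcomp_id e p : homw (mdegk k) e p -> hcomp e p = p.
Proof.
move=> hp; apply/mpolyP => m; rewrite mcoeff_hcomp; case: eqP => // me.
by case: (boolP (m \in msupp p)) => [/hp //|/memN_msupp_eq0 ->].
Qed.

Lemma hcomp_eq0 e p : (forall m, m \in msupp p -> mdegk k m != e) -> hcomp e p = 0.
Proof.
move=> pe; apply/mpolyP => m; rewrite mcoeff_hcomp mcoeff0; case: eqP => // me.
by case: (boolP (m \in msupp p)) => [/pe /eqP|/memN_msupp_eq0].
Qed.

Definition hdegs (p : R) : seq D := undup [seq mdegk k m | m <- msupp p].

Lemma hcomp_notin e p : e \notin hdegs p -> hcomp e p = 0.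
Proof.
move=> ep; apply: hcomp_eq0 => m mp; apply: contraNneq ep => <-.
by rewrite mem_undup map_f.
Qed.

Lemma sum_hcomp p : \sum_(e <- hdegs p) hcomp e p = p.
Proof.
apply/mpolyP => m; rewrite raddf_sum /=; under eq_bigr do rewrite mcoeff_hcomp.
case: (boolP (m \in msupp p)) => mp.
  under eq_bigr do rewrite eq_sym.
  by rewrite sum_ifeq ?undup_uniq // mem_undup map_f.
by rewrite memN_msupp_eq0 // big1 // => e _; case: eqP.
Qed.

Lemma retract_gen_homw (ls : seq R) l : retract_gens k ls -> l \in ls ->
  (exists d, homw (mdegk k) d l) /\ homw (fun m => (mdeg m)%:Z) 1 l.
Proof.
rewrite /retract_gens; case: k => /(_ l) gen /gen.
  move=> [i ->]; split.
    by exists (mdegk Multi U_(i)%MM) => m; rewrite msuppX inE => /eqP ->.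
  by move=> m; rewrite msuppX inE => /eqP ->; rewrite mdeg1.
by move=> lin; split; [exists 1 => m /lin /= -> | move=> m /lin ->].
Qed.

Lemma comp_mpolyX_homog (ls : seq R) (mu : 'X_{1..size ls}) : retract_gens k ls ->
  exists d, homw (mdegk k) d ('X_[mu] \mPo in_tuple ls).
Proof.
move=> rg; have /choice [dd homdd] : forall i : 'I_(size ls),
    exists d, homw (mdegk k) d (tnth (in_tuple ls) i).
  by move=> i; case: (retract_gen_homw rg (mem_tnth i (in_tuple ls))).
exists (\sum_i dd i *+ mu i).
by apply: comp_mpolyX_homw; [exact: mdegk0 | exact: mdegkD |].
Qed.

Lemma comp_mpolyX_tdeg (ls : seq R) (mu : 'X_{1..size ls}) : retract_gens k ls ->
  homw (fun m => (mdeg m)%:Z) (mdeg mu)%:Z ('X_[mu] \mPo in_tuple ls).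
Proof.
move=> rg; have -> : (mdeg mu)%:Z = \sum_(i < size ls) 1 *+ mu i.
  by rewrite mdegE -natz natr_sum.
apply: comp_mpolyX_homw => [|m1 m2|i]; first by rewrite mdeg0.
  by rewrite mdegD PoszD.
exact: (retract_gen_homw rg (mem_tnth i (in_tuple ls))).2.
Qed.

Lemma inS0 (ls : seq R) : inS ls 0.
Proof. by exists 0; rewrite comp_mpoly0. Qed.

Lemma inSD (ls : seq R) p q : inS ls p -> inS ls q -> inS ls (p + q).
Proof. by move=> [p' ->] [q' ->]; exists (p' + q'); rewrite comp_mpolyD. Qed.

Lemma inSZ (ls : seq R) (c : K) p : inS ls p -> inS ls (c *: p).
Proof. by move=> [p' ->]; exists (c *: p'); rewrite comp_mpolyZ. Qed.

Lemma inS_sum (ls : seq R) (I : Type) (r : seq I) (P : pred I) (F : I -> R) :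
  (forall i, P i -> inS ls (F i)) -> inS ls (\sum_(i <- r | P i) F i).
Proof. by move=> H; apply: big_ind => //; [exact: inS0 | exact: inSD]. Qed.

Definition klin_on (V : lmodType R) (ls : seq R) (F : R -> V) : Prop :=
  forall (c : K) p q, inS ls p -> inS ls q -> F (c%:MP * p + q) = c%:MP *: F p + F q.

Section KLinearOn.
Variables (V : lmodType R) (ls : seq R) (F : R -> V).
Hypothesis FL : klin_on ls F.

Lemma klin_on0 : F 0 = 0.
Proof.
have := FL (-1) (inS0 ls) (inS0 ls).
by rewrite mulr0 addr0 mpolyCN mpolyC1 scaleN1r addNr.
Qed.

Lemma klin_onZ c p : inS ls p -> F (c *: p) = c%:MP *: F p.
Proof.
by move=> Sp; have := FL c Sp (inS0 ls); rewrite !addr0 klin_on0 addr0 mul_mpolyC.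
Qed.

Lemma klin_onD p q : inS ls p -> inS ls q -> F (p + q) = F p + F q.
Proof. by move=> Sp Sq; have := FL 1 Sp Sq; rewrite mpolyC1 mul1r scale1r. Qed.

Lemma klin_on_sum (I : Type) (r : seq I) (G : I -> R) :
  (forall i, inS ls (G i)) -> F (\sum_(i <- r) G i) = \sum_(i <- r) F (G i).
Proof.
move=> SG; elim: r => [|i r IH]; first by rewrite !big_nil klin_on0.
by rewrite !big_cons klin_onD ?IH //; apply: inS_sum.
Qed.
End KLinearOn.

Lemma inS_hcomp_compX (ls : seq R) (e : D) mu : retract_gens k ls ->
  inS ls (hcomp e ('X_[mu] \mPo in_tuple ls)).
Proof.
move=> rg; have [d homX] := comp_mpolyX_homog mu rg.
have [<-|de] := eqVneq d e; first by rewrite hcomp_id //; exists 'X_[mu].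
by rewrite hcomp_eq0 => [|m /homX ->]; [exact: inS0 |].
Qed.

Lemma hcomp_compX_eq0 (ls : seq R) (e : D) mu : retract_gens k ls ->
  (tdeg e < mdeg mu)%N -> hcomp e ('X_[mu] \mPo in_tuple ls) = 0.
Proof.
move=> rg mu_big; apply: hcomp_eq0 => m /(comp_mpolyX_tdeg rg) [m_mu].
by apply: contraTneq mu_big => <-; rewrite tdeg_mdegk m_mu ltnn.
Qed.

Lemma hcomp_comp (ls : seq R) (e : D) (q : {mpoly K[size ls]}) :
  hcomp e (q \mPo in_tuple ls)
  = \sum_(mu <- msupp q) q@_mu *: hcomp e ('X_[mu] \mPo in_tuple ls).
Proof. by rewrite comp_mpolyEX linear_sum; apply: eq_bigr => mu _; rewrite linearZ. Qed.

Lemma inS_hcomp (ls : seq R) (e : D) p :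
  retract_gens k ls -> inS ls p -> inS ls (hcomp e p).
Proof.
move=> rg [q ->]; rewrite hcomp_comp; apply: inS_sum => mu _.
by apply: inSZ; exact: inS_hcomp_compX.
Qed.

Section DegreeSpan.
Variables (ls : seq R) (e : D).
Hypothesis rg : retract_gens k ls.

(* Retract generators have total degree 1, so only the monomials of total
   degree at most [tdeg e] contribute to the degree-[e] piece of [K[ls]]. *)
Definition smonos : seq 'X_{1..size ls} := monos_lt (size ls) (tdeg e).+1.

Definition sgen (i : 'I_(size smonos)) : R :=
  hcomp e ('X_[nth 0%MM smonos i] \mPo in_tuple ls).

Definition cvec (r : R) : 'rV[K]_(size (hmonos e)) :=
  \row_j r@_(nth 0%MM (hmonos e) j).

Lemma cvec_is_linear : linear cvec.
Proof. by move=> c r r'; apply/rowP => j; rewrite !mxE mcoeffD mcoeffZ. Qed.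

HB.instance Definition _ := GRing.isLinear.Build K R _ *:%R cvec cvec_is_linear.

Definition sgen_mx : 'M[K]_(size smonos, size (hmonos e)) := \matrix_i cvec (sgen i).

Definition scoord (r : R) : 'rV[K]_(size smonos) := cvec r *m pinvmx sgen_mx.

Lemma scoord_is_linear : linear scoord.
Proof. by move=> c r r'; rewrite /scoord linearP mulmxDl scalemxAl. Qed.

HB.instance Definition _ := GRing.isLinear.Build K R _ *:%R scoord scoord_is_linear.

Lemma cvec_inj r1 r2 : homw (mdegk k) e r1 -> homw (mdegk k) e r2 ->
  cvec r1 = cvec r2 -> r1 = r2.
Proof.
move=> hom1 hom2 /rowP eq12; apply/mpolyP => m.
have [me|me] := eqVneq (mdegk k m) e.
  have m_in : m \in hmonos e by rewrite -me mem_hmonos.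
  by have := eq12 (Ordinal (etrans (index_mem m _) m_in)); rewrite !mxE /= nth_index.
have coef0 r : homw (mdegk k) e r -> r@_m = 0.
  move=> homr; apply: memN_msupp_eq0; apply: contra me => /homr ->; exact: eqxx.
by rewrite !coef0.
Qed.

Lemma cvec_comb (c : 'rV[K]_(size smonos)) :
  cvec (\sum_i c 0 i *: sgen i) = c *m sgen_mx.
Proof.
by rewrite linear_sum mulmx_sum_row; apply: eq_bigr => i _; rewrite linearZ rowK.
Qed.

Lemma sgen_span r : inS ls r -> homw (mdegk k) e r ->
  exists c : 'rV[K]_(size smonos), r = \sum_i c 0 i *: sgen i.
Proof.
move=> [q ->] homr; exists (\row_i q@_(nth 0%MM smonos i)).
under [RHS]eq_bigr do rewrite mxE.
pose F mu := q@_mu *: hcomp e ('X_[mu] \mPo in_tuple ls).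
rewrite -(hcomp_id homr) hcomp_comp /sgen.
rewrite -(big_mkord xpredT (fun i => F (nth 0%MM smonos i))) -(big_nth 0%MM xpredT F).
apply: big_uniq_supp; [exact: msupp_uniq | exact: monos_lt_uniq |] => mu.
have [mq|mq] := boolP (mu \in msupp q); last by rewrite memN_msupp_eq0 // scale0r.
rewrite mem_monos_lt ltnS -ltnNge => mu_big.
by rewrite hcomp_compX_eq0 // scaler0.
Qed.

Lemma scoordK r : inS ls r -> homw (mdegk k) e r -> \sum_i scoord r 0 i *: sgen i = r.
Proof.
move=> Sr homr; apply: cvec_inj => //.
  by apply: homw_sum => i _; apply: homwZ; exact: hcomp_homw.
have [c rc] := sgen_span Sr homr.
by rewrite cvec_comb /scoord mulmxKpV // rc cvec_comb submxMl.
Qed.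

End DegreeSpan.

Section GradedLift.
Variables (M N : lmodType R) (GM : grading k M) (GN : grading k N) (g : M -> N).
Hypotheses (gG : graded_hom GM GN g) (gS : forall z, exists y, g y = z).

HB.instance Definition _ := GRing.isLinear.Build R M N *:%R g (proj1 gG).

Lemma graded_surj_hom d z : Defs.hom GN d z -> exists y, Defs.hom GM d y /\ g y = z.
Proof.
move=> hz; have gH := proj2 gG.
have [y0 y0z] := gS z.
have [t [dg [y [homy y0E]]]] := hom_span GM y0.
pose Y e := \sum_(j < t | dg j == e) y j.
have homY e : Defs.hom GM e (Y e) by apply: hom_sum => j /eqP <-.
exists (Y d); split => //.
pose s := undup (d :: [seq dg j | j <- enum 'I_t]).
have s_uniq : uniq s := undup_uniq _.
have ds : d \in s by rewrite mem_undup inE eqxx.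
pose F e := g (Y e) - (if e == d then z else 0).
have sumY : \sum_(e <- s) Y e = y0.
  rewrite y0E (exchange_big_dep xpredT) //=; apply: eq_bigr => j _.
  rewrite big_mkcond /=; under eq_bigr do rewrite eq_sym.
  rewrite sum_ifeq // mem_undup inE; apply/orP; right.
  by apply: map_f; rewrite mem_enum.
have sumF0 : \sum_(e <- s) F e = 0.
  by rewrite big_split /= -linear_sum /= sumY y0z sumrN sum_ifeq // subrr.
have homF e : e \in s -> Defs.hom GN e (F e).
  move=> _; apply: homD; first exact: gH.
  by apply: homN; case: eqP => [->|_]; [exact: hz | exact: hom0].
have /eqP := hom_direct_uniq s_uniq homF sumF0 ds.
by rewrite /F eqxx subr_eq0 => /eqP.
Qed.

Section LiftMap.
Variables (ls : seq R) (s : D) (Phi : R -> N).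
Hypotheses (rg : retract_gens k ls) (PhiL : klin_on ls Phi).
Variable w : D -> 'X_{1..size ls} -> M.
Hypothesis w_lift : forall e mu, Defs.hom GM (e + s) (w e mu) /\
  g (w e mu) = Phi (hcomp e ('X_[mu] \mPo in_tuple ls)).

Definition lift_deg (e : D) (r : R) : M :=
  \sum_i (scoord ls e r 0 i)%:MP *: w e (nth 0%MM (smonos ls e) i).

Lemma lift_degZD e c r r' :
  lift_deg e (c *: r + r') = c%:MP *: lift_deg e r + lift_deg e r'.
Proof.
rewrite /lift_deg scaler_sumr -big_split /=; apply: eq_bigr => i _.
by rewrite linearP !mxE mpolyCD mpolyCM scalerDl scalerA.
Qed.

Lemma lift_deg0 e : lift_deg e 0 = 0.
Proof. by rewrite /lift_deg linear0 big1 // => i _; rewrite mxE scale0r. Qed.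

Lemma lift_deg_hom e r : Defs.hom GM (e + s) (lift_deg e r).
Proof. by apply: hom_sum => i _; apply: homZ; exact: (w_lift _ _).1. Qed.

Lemma lift_deg_lifts e r :
  inS ls r -> homw (mdegk k) e r -> g (lift_deg e r) = Phi r.
Proof.
move=> Sr homr; rewrite -{2}(scoordK rg Sr homr) (klin_on_sum PhiL); last first.
  by move=> i; apply: inSZ; exact: inS_hcomp_compX.
rewrite linear_sum; apply: eq_bigr => i _ /=.
by rewrite linearZ /= (w_lift _ _).2 (klin_onZ PhiL) //; exact: inS_hcomp_compX.
Qed.

Definition lift (p : R) : M := \sum_(e <- hdegs p) lift_deg e (hcomp e p).

Lemma lift_supp p (s0 : seq D) : uniq s0 -> {subset hdegs p <= s0} ->
  lift p = \sum_(e <- s0) lift_deg e (hcomp e p).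
Proof.
move=> s0_uniq ps0; apply: big_uniq_supp; rewrite ?undup_uniq // => e.
have [ep|ep] := boolP (e \in hdegs p); first by rewrite ps0.
by rewrite hcomp_notin // lift_deg0.
Qed.

Lemma lift_klin : klin_on ls lift.
Proof.
move=> c p q _ _; rewrite mul_mpolyC.
pose s0 := undup (hdegs p ++ hdegs q ++ hdegs (c *: p + q)).
have sub r : {subset hdegs r <= s0} -> lift r = \sum_(e <- s0) lift_deg e (hcomp e r).
  exact/lift_supp/undup_uniq.
rewrite !sub => [|e ep|e ep|e ep]; rewrite ?mem_undup ?mem_cat ?ep ?orbT //.
rewrite scaler_sumr -big_split /=; apply: eq_bigr => e _.
by rewrite linearP lift_degZD.
Qed.

Lemma lift_hom e p : homw (mdegk k) e p -> Defs.hom GM (e + s) (lift p).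
Proof.
move=> homp; rewrite /lift big_seq; apply: hom_sum => e'.
by rewrite mem_undup => /mapP [m /homp <- ->]; exact: lift_deg_hom.
Qed.

Lemma lift_lifts p : inS ls p -> g (lift p) = Phi p.
Proof.
move=> Sp; rewrite /lift linear_sum -{3}(sum_hcomp p) (klin_on_sum PhiL) //=.
  apply: eq_bigr => e _; apply: lift_deg_lifts; [exact: inS_hcomp | exact: hcomp_homw].
by move=> e; exact: inS_hcomp.
Qed.

End LiftMap.

Lemma graded_klin_lift (ls : seq R) (s : D) (Phi : R -> N) :
  retract_gens k ls -> klin_on ls Phi ->
  (forall e p, inS ls p -> homw (mdegk k) e p -> Defs.hom GN (e + s) (Phi p)) ->
  exists psi : R -> M, [/\ klin_on ls psi,
    forall e p, inS ls p -> homw (mdegk k) e p -> Defs.hom GM (e + s) (psi p) &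
    forall p, inS ls p -> g (psi p) = Phi p].
Proof.
move=> rg PhiL PhiH.
have /choice [W W_lift] : forall em : D * 'X_{1..size ls},
    exists y, Defs.hom GM (em.1 + s) y /\
      g y = Phi (hcomp em.1 ('X_[em.2] \mPo in_tuple ls)).
  move=> [e mu]; apply: graded_surj_hom; apply: PhiH.
    exact: inS_hcomp_compX.
  exact: hcomp_homw.
pose w e mu := W (e, mu).
exists (lift w); split.
- exact: lift_klin.
- by move=> e p _; apply: lift_hom => e' mu; exact: (W_lift (e', mu)).
- by apply: lift_lifts => // e mu; exact: (W_lift (e, mu)).
Qed.

End GradedLift.

Definition is_dsum (V : lmodType R) t (L : 'I_t -> seq R) (Phi : 'I_t -> R -> V) : Prop :=
  (forall y, exists p, (forall i, inS (L i) (p i)) /\ y = \sum_i Phi i (p i)) /\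
  (forall p, (forall i, inS (L i) (p i)) -> \sum_i Phi i (p i) = 0 -> forall i, p i = 0).

Lemma is_dsum_ext (V : lmodType R) t (L : 'I_t -> seq R) (Phi Phi' : 'I_t -> R -> V) :
  (forall i p, Phi i p = Phi' i p) -> is_dsum L Phi -> is_dsum L Phi'.
Proof.
move=> eqPhi [span indep]; split=> [y|p Sp].
  by have [p [Sp ->]] := span y; exists p; split => //; apply: eq_bigr.
by under eq_bigr do rewrite -eqPhi; exact: indep.
Qed.

Lemma stanley_decE (V : lmodType R) (GV : grading k V) t (L : 'I_t -> seq R) x :
  stanley_dec GV L x <-> [/\ forall i, retract_gens k (L i),
    forall i, exists d, Defs.hom GV d (x i) & is_dsum L (fun i p => p *: x i)].
Proof.
split=> [[rg homx ann span indep]|[rg homx [span indep]]].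
  by split => //; split => // p Sp sum0 i; apply: (ann i _ (Sp i)); exact: indep.
split => // [i p Sp px0|p Sp sum0 i]; last by rewrite (indep p Sp sum0 i) scale0r.
pose q j := if j == i then p else 0.
have Sq j : inS (L j) (q j) by rewrite /q; case: eqP => [->|_]; [exact: Sp | exact: inS0].
have sumq0 : \sum_j q j *: x j = 0.
  rewrite (bigD1 i) //= big1 => [|j /negPf ji]; first by rewrite /q eqxx addr0.
  by rewrite /q ji scale0r.
by have := indep q Sq sumq0 i; rewrite /q eqxx.
Qed.

Lemma dec_depth_cat t1 t2 (L1 : 'I_t1 -> seq R) (L2 : 'I_t2 -> seq R) :
  dec_depth (fam_cat L1 L2) = emin (dec_depth L1) (dec_depth L2).
Proof.
rewrite /dec_depth /emin_fam big_split_ord; congr emin; apply: eq_bigr => i _.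
  by rewrite fam_cat_l.
by rewrite fam_cat_r.
Qed.

Definition depths (X : nat -> Type) (dec : forall t, ('I_t -> seq R) -> X t -> Prop)
    (v : enat) : Prop :=
  exists t L x, dec t L x /\ dec_depth L = v.

Lemma depths_emax (X : nat -> Type) (dec : forall t, ('I_t -> seq R) -> X t -> Prop) :
  (exists t L x, dec t L x) ->
  depths dec (emax_of (depths dec)) /\
  forall v, depths dec v -> ele v (emax_of (depths dec)).
Proof.
move=> [t [L [x decL]]]; apply: (@emax_ofP _ n).
  by exists (dec_depth L), t, L, x.
by move=> d [t' [L' [_ [_ /emin_fam_le]]]]; apply=> i; exact: rank_leq_col.
Qed.

Lemma depth_cat (XU XN XM : nat -> Type)
    (decU : forall t, ('I_t -> seq R) -> XU t -> Prop)
    (decN : forall t, ('I_t -> seq R) -> XN t -> Prop)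
    (decM : forall t, ('I_t -> seq R) -> XM t -> Prop) :
  (forall t1 L1 x1 t2 L2 x2, decU t1 L1 x1 -> decN t2 L2 x2 ->
     exists x, decM (t1 + t2) (fam_cat L1 L2) x) ->
  (exists t L x, decU t L x) -> (exists t L x, decN t L x) ->
  (exists t L x, decM t L x) /\
  ele (emin (emax_of (depths decU)) (emax_of (depths decN))) (emax_of (depths decM)).
Proof.
move=> cat exU exN.
have [[tU [LU [xU [decLU <-]]]] _] := depths_emax exU.
have [[tN [LN [xN [decLN <-]]]] _] := depths_emax exN.
have [x decLM] := cat _ _ _ _ _ _ decLU decLN.
have exM : exists t L x, decM t L x by exists (tU + tN), (fam_cat LU LN), x.
split => //; apply: (depths_emax exM).2.
by exists (tU + tN), (fam_cat LU LN), x; rewrite dec_depth_cat.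
Qed.

Section ShortExactSequence.
Variables (U M N : lmodType R) (GU : grading k U) (GM : grading k M) (GN : grading k N).
Variables (f : U -> M) (g : M -> N).
Hypotheses (fG : graded_hom GU GM f) (gG : graded_hom GM GN g) (f_inj : injective f)
  (g_surj : forall z, exists y, g y = z)
  (exact_fg : forall y, g y = 0 <-> exists u, y = f u).

HB.instance Definition _ := GRing.isLinear.Build R U M *:%R f (proj1 fG).
HB.instance Definition _ := GRing.isLinear.Build R M N *:%R g (proj1 gG).

Lemma gf0 u : g (f u) = 0.
Proof. by apply/exact_fg; exists u. Qed.

Lemma is_dsum_cat t1 t2 (L1 : 'I_t1 -> seq R) (L2 : 'I_t2 -> seq R)
    (Phi1 : 'I_t1 -> R -> U) (Phi2 : 'I_t2 -> R -> N) (Psi2 : 'I_t2 -> R -> M) :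
  is_dsum L1 Phi1 -> is_dsum L2 Phi2 ->
  (forall b p, inS (L2 b) p -> g (Psi2 b p) = Phi2 b p) -> (forall b, Psi2 b 0 = 0) ->
  is_dsum (fam_cat L1 L2) (fam_cat (fun a p => f (Phi1 a p)) Psi2).
Proof.
move=> [span1 indep1] [span2 indep2] Psi2_lift Psi2_0.
have split_sum (p : 'I_(t1 + t2) -> R) :
    \sum_i fam_cat (fun a p => f (Phi1 a p)) Psi2 i (p i)
    = f (\sum_a Phi1 a (p (lshift t2 a))) + \sum_b Psi2 b (p (rshift t1 b)).
  rewrite big_split_ord linear_sum; congr (_ + _); apply: eq_bigr => i _.
    by rewrite fam_cat_l.
  by rewrite fam_cat_r.
split=> [y|p Sp].
  have [p2 [Sp2 gy]] := span2 (g y).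
  have /exact_fg [u yu] : g (y - \sum_b Psi2 b (p2 b)) = 0.
    rewrite linearB linear_sum /= gy -sumrB big1 // => b _.
    by rewrite Psi2_lift ?subrr.
  have [p1 [Sp1 uE]] := span1 u.
  exists (fam_cat p1 p2); split.
    by move=> i; case: (split_ordP i) => j ->; rewrite ?fam_cat_l ?fam_cat_r.
  rewrite split_sum; under eq_bigr do rewrite fam_cat_l.
  under [X in _ + X]eq_bigr do rewrite fam_cat_r.
  by rewrite -uE -yu subrK.
have Sp1 a : inS (L1 a) (p (lshift t2 a)).
  by have := Sp (lshift t2 a); rewrite fam_cat_l.
have Sp2 b : inS (L2 b) (p (rshift t1 b)).
  by have := Sp (rshift t1 b); rewrite fam_cat_r.
rewrite split_sum => sum0.
have p2_0 : forall b, p (rshift t1 b) = 0.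
  apply: indep2 => //; move/(congr1 g): sum0.
  rewrite linearD /= gf0 add0r linear_sum linear0 => sum2_0.
  by rewrite -[RHS]sum2_0; apply: eq_bigr => b _; rewrite /= Psi2_lift.
have p1_0 : forall a, p (lshift t2 a) = 0.
  have sum2_0 : \sum_b Psi2 b (p (rshift t1 b)) = 0.
    by rewrite big1 // => b _; rewrite p2_0 Psi2_0.
  by apply: indep1 => //; apply: f_inj; rewrite linear0 -sum0 sum2_0 addr0.
by move=> i; case: (split_ordP i) => j ->.
Qed.

Lemma stanley_cat t1 (L1 : 'I_t1 -> seq R) x1 t2 (L2 : 'I_t2 -> seq R) x2 :
  stanley_dec GU L1 x1 -> stanley_dec GN L2 x2 ->
  exists x, stanley_dec GM (fam_cat L1 L2) x.
Proof.
move=> /stanley_decE [rg1 homx1 dsum1] /stanley_decE [rg2 homx2 dsum2].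
have /choice [y2 y2_lift] : forall b,
    exists y, (exists d, Defs.hom GM d y) /\ g y = x2 b.
  move=> b; have [d homx] := homx2 b.
  have [y [homy gy]] := graded_surj_hom gG g_surj homx.
  by exists y; split; first exists d.
exists (fam_cat (fun a => f (x1 a)) y2); apply/stanley_decE; split.
- by move=> i; case: (split_ordP i) => j ->; rewrite ?fam_cat_l ?fam_cat_r.
- move=> i; case: (split_ordP i) => j ->; rewrite ?fam_cat_l ?fam_cat_r.
    by have [d homx] := homx1 j; exists d; exact: (proj2 fG).
  exact: (y2_lift j).1.
- apply: is_dsum_ext (is_dsum_cat dsum1 dsum2 (Psi2 := fun b p => p *: y2 b) _ _).
  + move=> i; case: (split_ordP i) => j -> p; rewrite ?fam_cat_l ?fam_cat_r //=.
    by rewrite linearZ.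
  + by move=> b p _; rewrite linearZ /= (y2_lift b).2.
  + by move=> b; rewrite scale0r.
Qed.

Lemma hilbert_cat t1 (L1 : 'I_t1 -> seq R) s1 t2 (L2 : 'I_t2 -> seq R) s2 :
  hilbert_dec GU L1 s1 -> hilbert_dec GN L2 s2 ->
  exists s, hilbert_dec GM (fam_cat L1 L2) s.
Proof.
move=> [rg1 [phi1 [lin1 hom1 span1 indep1]]] [rg2 [phi2 [lin2 hom2 span2 indep2]]].
have /choice [psi2 psi2P] :=
  fun b => graded_klin_lift gG g_surj (rg2 b) (lin2 b) (hom2 b).
exists (fam_cat s1 s2); split.
  by move=> i; case: (split_ordP i) => j ->; rewrite ?fam_cat_l ?fam_cat_r.
exists (fam_cat (fun a p => f (phi1 a p)) psi2).
have psi2_lift b p : inS (L2 b) p -> g (psi2 b p) = phi2 b p.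
  by case: (psi2P b) => _ _; apply.
have psi2_0 b : psi2 b 0 = 0 by case: (psi2P b) => /klin_on0.
have [span indep] := is_dsum_cat (conj span1 indep1) (conj span2 indep2) psi2_lift psi2_0.
split => //.
- move=> i; case: (split_ordP i) => j ->; rewrite ?fam_cat_l ?fam_cat_r.
    by move=> c p q Sp Sq; rewrite lin1 // linearD linearZ.
  by case: (psi2P j).
- move=> i; case: (split_ordP i) => j ->; rewrite ?fam_cat_l ?fam_cat_r.
    by move=> e p Sp homp; apply: (proj2 fG); exact: hom1.
  by case: (psi2P j).
Qed.

End ShortExactSequence.

End Graded.

Theorem proposition2p6 (K : fieldType) (n : nat) (k : gkind)
    (U M N : lmodType {mpoly K[n]})
    (GU : grading k U) (GM : grading k M) (GN : grading k N)
    (f : U -> M) (g : M -> N) :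
  fingen U -> fingen M -> fingen N ->
  graded_hom GU GM f -> graded_hom GM GN g ->
  injective f ->
  (forall z : N, exists y : M, g y = z) ->
  (forall y : M, g y = 0 <-> exists u : U, y = f u) ->
  ((has_stanley GU -> has_stanley GN ->
      has_stanley GM /\ ele (emin (Stdepth GU) (Stdepth GN)) (Stdepth GM)) /\
   (has_hilbert GU -> has_hilbert GN ->
      has_hilbert GM /\ ele (emin (Hdepth GU) (Hdepth GN)) (Hdepth GM))).
Proof.
move=> _ _ _ fG gG f_inj g_surj exact_fg; split.
- exact: depth_cat (stanley_cat fG gG f_inj g_surj exact_fg).
- exact: depth_cat (hilbert_cat fG gG f_inj g_surj exact_fg).
Qed.
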